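(* Let $V$ be an $n$-dimensional vector space over a field $\mathbb{F}$ with an alternating bilinear form $\mathsf{s}$ of maximal rank. Then the pre-geometry $\Gamma(V)$ is transversal and has a string diagram (with respect to the natural ordering of the type set $I=\{1,\dots,n-1\}$).
   Context: $\mathrm{Rad}(U)=U\cap U^\perp$ with respect to $\mathsf{s}$; maximal rank means $\dim\mathrm{Rad}(V)\le1$. $\Gamma(V)$: for $i\in I$ the objects of type $i$ are the $i$-dimensional subspaces $U$ with $U\cap\mathrm{Rad}(V)=0$ and $\dim\mathrm{Rad}(U)\le1$; $X,Y$ are incident iff $X=Y$, or $X\subseteq Y$ with $X\cap\mathrm{Rad}(Y)=0$, or vice versa. A flag is a set of pairwise incident objects, a chamber is a flag containing an object of every type. Transversal: every flag is contained in a chamber. Has a string diagram (w.r.t. a total order on $I$): whenever $i<j<k$ and $X,Y,Z$ are objects of types $i,j,k$ with $X$ and $Z$ both incident to $Y$, then $X$ is incident to $Z$. *)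

From HB Require Import structures.
From mathcomp Require Import all_boot all_order all_algebra.
Set Implicit Arguments. Unset Strict Implicit. Unset Printing Implicit Defensive.
Import GRing.Theory.
Local Open Scope ring_scope.

Section Pregeometry.
Variables (F : fieldType) (vT : vectType F) (s : vT -> vT -> F).

Definition bilinear_form : Prop :=
  (forall u a v w, s u (a *: v + w) = a * s u v + s u w) /\
  (forall v a u w, s (a *: u + w) v = a * s u v + s w v).

Definition alternating : Prop := forall v, s v v = 0.

(* U^perp w.r.t. s, as a subspace: the common kernel of the linear forms
   s u (u ranging over a basis of U); for bilinear s this is
   {v | forall u in U, s u v = 0}. *)
Definition perp (U : {vspace vT}) : {vspace vT} :=
  (\bigcap_(u <- vbasis U) lker (linfun (s u : vT -> F^o)))%VS.

Definition Rad (U : {vspace vT}) : {vspace vT} := (U :&: perp U)%VS.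

Definition maximal_rank : Prop := (\dim (Rad fullv) <= 1)%N.

Definition n_dim : nat := \dim (fullv : {vspace vT}).

Definition is_type (i : nat) : Prop := (1 <= i)%N /\ (i <= n_dim - 1)%N.

Definition object_of_type (i : nat) (U : {vspace vT}) : Prop :=
  is_type i /\ \dim U = i /\ (U :&: Rad fullv = 0)%VS /\ (\dim (Rad U) <= 1)%N.

Definition is_object (U : {vspace vT}) : Prop := exists i, object_of_type i U.

Definition incident (X Y : {vspace vT}) : Prop :=
  X = Y \/ ((X <= Y)%VS /\ (X :&: Rad Y = 0)%VS) \/
  ((Y <= X)%VS /\ (Y :&: Rad X = 0)%VS).

Definition is_flag (Fl : {vspace vT} -> Prop) : Prop :=
  (forall X, Fl X -> is_object X) /\
  (forall X Y, Fl X -> Fl Y -> incident X Y).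

Definition is_chamber (C : {vspace vT} -> Prop) : Prop :=
  is_flag C /\ (forall i, is_type i -> exists X, C X /\ object_of_type i X).

Definition Gamma_transversal : Prop :=
  forall Fl, is_flag Fl ->
    exists C, is_chamber C /\ (forall X, Fl X -> C X).

Definition Gamma_string_diagram : Prop :=
  forall (i j k : nat) (X Y Z : {vspace vT}),
    (i < j)%N -> (j < k)%N ->
    object_of_type i X -> object_of_type j Y -> object_of_type k Z ->
    incident X Y -> incident Z Y -> incident X Z.

End Pregeometry.

(* Objects are typed by dimension, and two incident objects X, Y with
   dim X < dim Y satisfy X <= Y and X :&: Rad Y = 0.  This relation is
   transitive, which gives the string diagram.  For transversality, a missing
   type i is inserted between the nearest flag members A below and B above
   (or 0 and the whole space), climbing from A to B one dimension at a time:
   add to A a vector v of B outside A + Rad B such that s v r <> 0 when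
   Rad A = <[r]> is nonzero.  Then Z = A + <[v]> meets Rad B trivially,
   A meets Rad Z trivially, and hence dim Rad Z <= 1 since A is a hyperplane
   of Z. *)

From HB Require Import structures.
From mathcomp Require Import all_boot all_order all_algebra zify.
From Stdlib Require Import Classical.
Set Implicit Arguments. Unset Strict Implicit. Unset Printing Implicit Defensive.
Import GRing.Theory.
Local Open Scope ring_scope.

Lemma ex_argmin (T : Type) (P : T -> Prop) (f : T -> nat) :
  (exists x, P x) -> exists x, P x /\ forall y, P y -> (f x <= f y)%N.
Proof.
move=> [x Px]; apply: NNPP => nomin.
suff noP : forall n y, (f y <= n)%N -> ~ P y by exact: noP _ x (leqnn _) Px.
elim=> [|n IH] y fy Py; apply: nomin; exists y; split=> // z Pz;
  rewrite leqNgt; apply/negP => fzy; first by lia.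
by apply: (IH z) => //; lia.
Qed.

Lemma ex_argmax (T : Type) (P : T -> Prop) (f : T -> nat) (n : nat) :
  (forall x, P x -> (f x < n)%N) -> (exists x, P x) ->
  exists x, P x /\ forall y, P y -> (f y <= f x)%N.
Proof.
move=> bound exP; have [x [Px min_x]] := ex_argmin (fun x => n - f x)%N exP.
exists x; split=> // y Py; have := min_x y Py; have := bound x Px; have := bound y Py.
lia.
Qed.

Section VspaceFacts.
Variables (F : fieldType) (vT : vectType F).
Implicit Types (U V W : {vspace vT}) (v : vT).

Lemma capv_eq0S U V W : (U <= V)%VS -> (V :&: W = 0)%VS -> (U :&: W = 0)%VS.
Proof. by move=> UV VW0; apply/eqP; rewrite -subv0 -VW0 capvS. Qed.

Lemma capv_line_eq0 U v : v \notin U -> (<[v]> :&: U = 0)%VS.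
Proof.
move=> vU; apply/eqP; rewrite -subv0; apply/subvP => w /memv_capP[/vlineP[k ->] kvU].
have [-> | k0] := eqVneq k 0; first by rewrite scale0r mem0v.
by case/negP: vU; rewrite -(scalerK k0 v) memvZ.
Qed.

Lemma dimv_add_line U v : v \notin U -> \dim (U + <[v]>) = (\dim U).+1.
Proof.
move=> vU; have v0 : v != 0 by apply: contra vU => /eqP->; rewrite mem0v.
have lt_U : (\dim U < \dim (U + <[v]>))%N.
  by rewrite (ltn_leqif (dimv_leqif_sup (addvSl U _))) subv_add subvv -memvE.
have := (dimv_add_leqif U <[v]>).1; rewrite dim_vline v0; lia.
Qed.

Lemma capv_add_line_eq0 U W v :
  v \notin (U + W)%VS -> (U :&: W = 0)%VS -> ((U + <[v]>) :&: W = 0)%VS.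
Proof.
move=> vUW UW0; have vU : v \notin U by apply: contra vUW; apply: subvP (addvSl U W) v.
apply/eqP; rewrite -dimv_eq0; have := dimv_sum_cap (U + <[v]>) W.
rewrite -addvA [(<[v]> + W)%VS]addvC addvA !dimv_add_line //.
have := dimv_sum_cap U W; rewrite UW0 dimv0; lia.
Qed.

Lemma dimv_le1_disjoint_hyperplane U V W :
  (U <= V)%VS -> \dim V = (\dim U).+1 -> (W <= V)%VS -> (U :&: W = 0)%VS ->
  (\dim W <= 1)%N.
Proof.
move=> UV dV WV UW0; have := dimv_sum_cap U W; rewrite UW0 dimv0 addn0.
have : (\dim (U + W) <= \dim V)%N by rewrite dimvS // subv_add UV.
lia.
Qed.

Lemma exists_notin_subv2 B U W :
  ~~ (B <= U)%VS -> ~~ (B <= W)%VS -> exists v, [/\ v \in B, v \notin U & v \notin W].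
Proof.
move=> /subvPn[x xB xU] /subvPn[y yB yW].
have [xW | xW] := boolP (x \in W); last by exists x.
have [yU | yU] := boolP (y \in U); last by exists y.
exists (x + y); split; first exact: memvD.
- by apply: contra xU => xyU; rewrite -(addrK y x) memvB.
- by apply: contra yW => xyW; rewrite -(addKr x y) memvD ?memvN.
Qed.

End VspaceFacts.

Section BilinearForm.
Variables (F : fieldType) (vT : vectType F) (s : vT -> vT -> F).
Hypothesis sB : bilinear_form s.
Implicit Types (A B U V X Y Z : {vspace vT}) (u v w : vT).

Lemma form_linear_r u : linear (s u : vT -> F^o).
Proof. by move=> a v w; rewrite sB.1. Qed.

Lemma form_linear_l v : linear ((s^~ v) : vT -> F^o).
Proof. by move=> a u w; rewrite sB.2. Qed.

Definition form_r u : {linear vT -> F^o} :=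
  HB.pack (s u : vT -> F^o) (GRing.isLinear.Build _ _ _ _ _ (form_linear_r u)).

Definition form_l v : {linear vT -> F^o} :=
  HB.pack ((s^~ v) : vT -> F^o) (GRing.isLinear.Build _ _ _ _ _ (form_linear_l v)).

Lemma formDl u w v : s (u + w) v = s u v + s w v.
Proof. exact: (linearD (form_l v)). Qed.

Lemma formZl a u v : s (a *: u) v = a * s u v.
Proof. exact: (linearZ_LR (form_l v)). Qed.

Lemma memv_perp U v : (v \in perp s U) = all (fun u => s u v == 0) (vbasis U).
Proof.
rewrite /perp; elim: (tval (vbasis U)) => [|u r IH]; first by rewrite big_nil memvf.
by rewrite big_cons memv_cap IH memv_ker (lfunE (form_r u)).
Qed.

Lemma perpP U v : reflect {in U, forall u, s u v = 0} (v \in perp s U).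
Proof.
rewrite memv_perp; apply: (iffP allP) => [perp_basis | perpU u /vbasis_mem/perpU->//].
have /subvP UK : (U <= lker (linfun (form_l v)))%VS.
  rewrite -(span_basis (vbasisP U)); apply/span_subvP => u /perp_basis.
  by rewrite memv_ker lfunE.
by move=> u /UK; rewrite memv_ker lfunE => /eqP.
Qed.

Lemma perp_line v w : (w \in perp s <[v]>) = (s v w == 0).
Proof.
apply/perpP/eqP => [/(_ v (memv_line v)) // | svw u /vlineP[k ->]].
by rewrite formZl svw mulr0.
Qed.

Lemma perpD U V : perp s (U + V) = (perp s U :&: perp s V)%VS.
Proof.
apply/vspaceP => w; rewrite memv_cap.
apply/perpP/andP => [perpUV | [/perpP perpU /perpP perpV] _ /memv_addP[x xU [y yV ->]]].
  split; apply/perpP => u uX; apply: perpUV.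
  - exact: subvP (addvSl U V) u uX.
  - exact: subvP (addvSr U V) u uX.
by rewrite formDl perpU // perpV // addr0.
Qed.

Lemma capv_Rad_addv U V : (U :&: Rad s (U + V) = Rad s U :&: perp s V)%VS.
Proof. by rewrite /Rad perpD !capvA (capv_idPl (addvSl U V)). Qed.

Definition sub_inc X Y : Prop := (X <= Y)%VS /\ (X :&: Rad s Y = 0)%VS.

Lemma sub_inc_trans X Y Z : sub_inc X Y -> sub_inc Y Z -> sub_inc X Z.
Proof.
move=> [XY _] [YZ YRZ0]; split; first exact: subv_trans XY YZ.
exact: capv_eq0S XY YRZ0.
Qed.

Lemma exists_extension_vector A B :
  sub_inc A B -> (\dim (Rad s A) <= 1)%N -> ~~ (B <= A + Rad s B)%VS ->
  exists v, [/\ v \in B, v \notin (A + Rad s B)%VS & (Rad s A :&: perp s <[v]> = 0)%VS].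
Proof.
move=> [AB ARB0] dRA BAR.
have [RA0 | RAn0] := eqVneq (Rad s A) 0%VS.
  by have [v vB vAR] := subvPn BAR; exists v; rewrite RA0 cap0v.
set r := vpick (Rad s A).
have r0 : r != 0 by rewrite vpick0.
have RAr : Rad s A = <[r]>%VS.
  by apply/eqP; rewrite eq_sym eqEdim -memvE memv_pick dim_vline r0.
have rA : r \in A := subvP (capvSl A (perp s A)) r (memv_pick _).
have rRB : r \notin Rad s B.
  by apply: contra r0 => rRB; rewrite -memv0 -ARB0 memv_cap rA.
have BK : ~~ (B <= lker (linfun (form_l r)))%VS.
  apply: contra rRB => /subvP BK; rewrite memv_cap (subvP AB) //.
  by apply/perpP => u /BK; rewrite memv_ker lfunE => /eqP.
have [v [vB vAR vK]] := exists_notin_subv2 BAR BK.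
exists v; split=> //; rewrite RAr capv_line_eq0 // perp_line.
by move: vK; rewrite memv_ker lfunE.
Qed.

Lemma extend_sub_inc A B :
  sub_inc A B -> ((\dim A).+1 < \dim B)%N ->
  (\dim (Rad s A) <= 1)%N -> (\dim (Rad s B) <= 1)%N ->
  exists Z, [/\ sub_inc A Z, sub_inc Z B, \dim Z = (\dim A).+1 & (\dim (Rad s Z) <= 1)%N].
Proof.
move=> [AB ARB0] dAB dRA dRB.
have BAR : ~~ (B <= A + Rad s B)%VS.
  by apply/negP => /dimvS le_B; have := (dimv_add_leqif A (Rad s B)).1; lia.
have [v [vB vAR RAv0]] := exists_extension_vector (conj AB ARB0) dRA BAR.
have vA : v \notin A by apply: contra vAR; apply: subvP (addvSl _ _) v.
have AZ0 : (A :&: Rad s (A + <[v]>) = 0)%VS by rewrite capv_Rad_addv.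
have dZ := dimv_add_line vA.
exists (A + <[v]>)%VS; split=> //.
- by split; first exact: addvSl.
- by split; [rewrite subv_add AB -memvE | apply: capv_add_line_eq0].
- exact: dimv_le1_disjoint_hyperplane (addvSl _ _) dZ (capvSl _ _) AZ0.
Qed.

Lemma fill_sub_inc A B i :
  sub_inc A B -> (\dim A < i < \dim B)%N ->
  (\dim (Rad s A) <= 1)%N -> (\dim (Rad s B) <= 1)%N ->
  exists Z, [/\ sub_inc A Z, sub_inc Z B, \dim Z = i & (\dim (Rad s Z) <= 1)%N].
Proof.
move=> AB /andP[lt_Ai lt_iB] dRA dRB.
elim: i lt_Ai lt_iB => [// | i IH]; rewrite ltnS leq_eqVlt => /orP[/eqP eAi | lt_Ai] lt_iB.
  by rewrite -eAi; apply: extend_sub_inc; rewrite ?eAi.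
have [Y [AY YB dY dRY]] := IH lt_Ai (ltnW lt_iB).
have lt_YB : ((\dim Y).+1 < \dim B)%N by rewrite dY.
have [Z [YZ ZB dZ dRZ]] := extend_sub_inc YB lt_YB dRY dRB.
by exists Z; split=> //; [apply: sub_inc_trans AY YZ | rewrite dZ dY].
Qed.

End BilinearForm.

Section Flags.
Variables (F : fieldType) (vT : vectType F) (s : vT -> vT -> F).
Implicit Types (C : {vspace vT} -> Prop) (X Y Z : {vspace vT}).

Lemma incident_sym X Y : incident s X Y -> incident s Y X.
Proof. by case=> [-> | []]; [left | right; right | right; left]. Qed.

Lemma incident_dim_le X Y :
  incident s X Y -> (\dim X <= \dim Y)%N -> X = Y \/ sub_inc s X Y.
Proof.
case=> [-> | [XY | [YX _] dXY]]; [by left | by right | left].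
by apply/eqP; rewrite eq_sym eqEdim YX.
Qed.

Lemma incident_dim_lt X Y : incident s X Y -> (\dim X < \dim Y)%N -> sub_inc s X Y.
Proof.
move=> XY lt_XY; case: (incident_dim_le XY (ltnW lt_XY)) => // eXY.
by rewrite eXY ltnn in lt_XY.
Qed.

Lemma object_Rad X :
  is_object s X -> (\dim (Rad s X) <= 1)%N /\ (X :&: Rad s fullv = 0)%VS.
Proof. by case=> i [_ [_ []]]. Qed.

Lemma flag_below C i : is_flag s C -> (0 < i)%N ->
  exists A, [/\ (\dim A < i)%N, C A \/ A = 0%VS &
    forall X, C X -> (\dim X < i)%N -> X = A \/ sub_inc s X A].
Proof.
move=> [_ Cinc] i_gt0.
have [exX | noX] := classic (exists X, C X /\ (\dim X < i)%N); last first.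
  exists 0%VS; split=> [| | X CX dX]; [by rewrite dimv0 | by right | by case: noX; exists X].
have [A [[CA dA] maxA]] := ex_argmax (f := fun X => \dim X) (fun X => @proj2 _ _) exX.
exists A; split=> [// | | X CX dX]; first by left.
exact: incident_dim_le (Cinc X A CX CA) (maxA X (conj CX dX)).
Qed.

Lemma flag_above C i : is_flag s C -> (i < n_dim vT)%N ->
  exists B, [/\ (i < \dim B)%N, C B \/ B = fullv &
    forall X, C X -> (i < \dim X)%N -> B = X \/ sub_inc s B X].
Proof.
move=> [_ Cinc] lt_in.
have [exX | noX] := classic (exists X, C X /\ (i < \dim X)%N); last first.
  exists fullv; split=> [| | X CX dX]; [by [] | by right | by case: noX; exists X].
have [B [[CB dB] minB]] := ex_argmin (fun X => \dim X) exX.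
exists B; split=> [// | | X CX dX]; first by left.
exact: incident_dim_le (Cinc B X CB CX) (minB X (conj CX dX)).
Qed.

Lemma flag_add C Z : is_flag s C -> is_object s Z ->
  (forall X, C X -> incident s X Z) -> is_flag s (fun X => C X \/ X = Z).
Proof.
move=> [Cobj Cinc] oZ CZ; split=> [X [/Cobj // | -> //] | X Y [CX | ->] [CY | ->]].
- exact: Cinc.
- exact: CZ.
- exact/incident_sym/CZ.
- by left.
Qed.

Hypothesis sB : bilinear_form s.
Hypothesis sM : maximal_rank s.

Lemma exists_incident_object C i : is_flag s C -> is_type vT i ->
  ~ (exists X, C X /\ object_of_type s i X) ->
  exists Z, object_of_type s i Z /\ forall X, C X -> incident s X Z.
Proof.
move=> Cflag ti noCi; have [Cobj Cinc] := Cflag; have [i_gt0 le_in] := ti.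
have [A [dA CA0 belowA]] := flag_below Cflag i_gt0.
have lt_in : (i < n_dim vT)%N by rewrite /n_dim in le_in *; lia.
have [B [dB CBV aboveB]] := flag_above Cflag lt_in.
have [dRA ARV0] : (\dim (Rad s A) <= 1)%N /\ (A :&: Rad s fullv = 0)%VS.
  case: CA0 => [/Cobj/object_Rad // | ->]; rewrite cap0v.
  by split; [rewrite (leq_trans (dimvS (capvSl 0%VS (perp s 0%VS)))) ?dimv0 |].
have dRB : (\dim (Rad s B) <= 1)%N by case: CBV => [/Cobj/object_Rad[] | ->].
have ZRV0 Z : sub_inc s Z B -> (Z :&: Rad s fullv = 0)%VS.
  case: CBV => [/Cobj/object_Rad[_ BRV0] [ZB _] | -> [_ //]].
  exact: capv_eq0S ZB BRV0.
have AB : sub_inc s A B.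
  case: CA0 CBV => [CA [CB | ->] | -> _].
  - exact: incident_dim_lt (Cinc A B CA CB) (ltn_trans dA dB).
  - by split; first exact: subvf.
  - by split; rewrite ?sub0v ?cap0v.
have [Z [AZ ZB dZ dRZ]] := fill_sub_inc sB AB (introT andP (conj dA dB)) dRA dRB.
exists Z; split; first by do !split => //; apply: ZRV0.
move=> X CX; have [j oX] := Cobj X CX; have dX : \dim X = j by case: oX => _ [].
have : j != i by apply/eqP => eji; apply: noCi; exists X; rewrite -eji.
rewrite neq_ltn -dX => /orP[lt_Xi | lt_iX]; right; [left | right].
- have [-> // | XA] := belowA X CX lt_Xi.
  exact: sub_inc_trans XA AZ.
- have [<- // | BX] := aboveB X CX lt_iX.
  exact: sub_inc_trans ZB BX.
Qed.

Lemma flag_extend_type C i : is_flag s C -> is_type vT i ->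
  exists C', [/\ is_flag s C', forall X, C X -> C' X &
    exists X, C' X /\ object_of_type s i X].
Proof.
move=> Cflag ti; have [Ci | noCi] := classic (exists X, C X /\ object_of_type s i X).
  by exists C.
have [Z [oZ CZ]] := exists_incident_object Cflag ti noCi.
exists (fun X => C X \/ X = Z); split=> [| X | ]; [| by left | by exists Z; split; [right|]].
exact: flag_add (ex_intro _ i oZ) CZ.
Qed.

Lemma flag_complete_upto C m : is_flag s C ->
  exists C', [/\ is_flag s C', forall X, C X -> C' X &
    forall i, is_type vT i -> (i <= m)%N -> exists X, C' X /\ object_of_type s i X].
Proof.
move=> Cflag; elim: m => [|m [C1 [C1flag CC1 C1types]]].
  by exists C; split=> // i [i_gt0 _] /(leq_trans i_gt0).
have [tm | ntm] := classic (is_type vT m.+1); last first.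
  exists C1; split=> // i ti; rewrite leq_eqVlt ltnS => /orP[/eqP ei | ].
    by rewrite ei in ti.
  exact: C1types.
have [C2 [C2flag C12 [Z [C2Z oZ]]]] := flag_extend_type C1flag tm.
exists C2; split=> [// | X /CC1/C12 // | i ti].
rewrite leq_eqVlt ltnS => /orP[/eqP -> | /(C1types i ti)[X [C1X oX]]].
  by exists Z.
by exists X; split=> //; apply: C12.
Qed.

Lemma transversal_Gamma : Gamma_transversal s.
Proof.
move=> C Cflag; have [C' [C'flag CC' C'types]] := flag_complete_upto (n_dim vT) Cflag.
exists C'; split=> //; split=> // i ti; apply: C'types => //.
by case: ti; rewrite /n_dim; lia.
Qed.

End Flags.

Lemma string_diagram_Gamma (F : fieldType) (vT : vectType F) (s : vT -> vT -> F) :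
  Gamma_string_diagram s.
Proof.
move=> i j k X Y Z lt_ij lt_jk oX oY oZ XY ZY; right; left.
apply: sub_inc_trans (incident_dim_lt XY _) (incident_dim_lt (incident_sym ZY) _).
- by rewrite oX.2.1 oY.2.1.
- by rewrite oY.2.1 oZ.2.1.
Qed.

Theorem lemma3p2 (F : fieldType) (vT : vectType F) (s : vT -> vT -> F) :
  bilinear_form s -> alternating s -> maximal_rank s ->
  Gamma_transversal s /\ Gamma_string_diagram s.
Proof.
move=> sB _ sM; split; [exact: transversal_Gamma | exact: string_diagram_Gamma].
Qed.
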